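(* Let $\Lambda$ be a net of quadrics in $\mathbb{P}^5$. For each $i\in\{1,\dots,5\}$, $\Lambda$ fails to be stable with respect to some one-parameter subgroup of numerical type $\rho_i$ if and only if there is a complete flag $F_0\subset F_1\subset F_2\subset F_3\subset F_4\subset\mathbb{P}^5$ of linear subspaces ($\dim F_j=j$) such that the corresponding condition holds: (1) $\rho_1=(1,1,1,1,1,-5)$: some element of $\Lambda$ contains $F_4$. (2) $\rho_2=(1,1,1,1,-2,-2)$: (a) some pencil in $\Lambda$ contains $F_3$, or (b) some element of $\Lambda$ is singular along $F_3$. (3) $\rho_3=(1,1,1,-1,-1,-1)$: (a) $\Lambda$ contains $F_2$, or (b) some pencil in $\Lambda$ contains $F_2$ and an element of that pencil is singular along $F_2$. (4) $\rho_4=(2,2,-1,-1,-1,-1)$: (a) $\Lambda$ contains $F_1$ and some element of $\Lambda$ is singular along $F_1$, or (b) some pencil in $\Lambda$ is singular along $F_1$. (5) $\rho_5=(5,-1,-1,-1,-1,-1)$: $\Lambda$ contains $F_0$ and some pencil in $\Lambda$ is singular at $F_0$.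
   Context: A net of quadrics in $\mathbb{P}^5$ is a $3$-dimensional subspace $\Lambda$ of the space $W$ of quadratic forms on $\mathbb{C}^6$, viewed in $Gr(3,W)\subset\mathbb{P}(\bigwedge^3W)$ with $SL(6)$-action. A 1-PS of numerical type $(a_0,\dots,a_5)$ acts diagonally on some basis $x_0,\dots,x_5$ of linear forms with these weights; the weight of $x_ix_j$ is $a_i+a_j$, that of a Plücker coordinate $x_{i_1}x_{j_1}\wedge x_{i_2}x_{j_2}\wedge x_{i_3}x_{j_3}$ is the sum of monomial weights; $\Lambda$ is stable w.r.t. $\rho$ if some Plücker coordinate not vanishing on $\Lambda$ has positive $\rho$-weight. A pencil in $\Lambda$ is a $2$-dimensional subspace; ''a pencil (resp. $\Lambda$) contains/is singular along $F$'' means every quadric in it contains $F$ / is singular along $F$. (The flag corresponds to a basis via $F_j=\{x_{j+1}=\dots=x_5=0\}$.) *)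

From HB Require Import structures.
From mathcomp Require Import all_boot all_order all_algebra.
From mathcomp Require Import reals complex.
Set Implicit Arguments. Unset Strict Implicit. Unset Printing Implicit Defensive.
Import Order.TTheory GRing.Theory Num.Theory.
Local Open Scope ring_scope.

(* A net of
   quadrics is a 3-dimensional subspace of the space W of symmetric matrices
   (= quadratic forms, char 0).  A projective linear subspace of P^5 of
   dimension j is a vector subspace of dimension j+1. *)

Section Defs.
Variable F : fieldType.
Local Notation mat := 'M[F]_6.
Local Notation vec := 'cV[F]_6.

Definition qform (A : mat) (v : vec) : F := (v^T *m A *m v) 0 0.

Definition is_net (L : {vspace mat}) : Prop :=
  \dim L = 3%N /\ (forall A, A \in L -> A^T = A).

Definition is_pencil_in (P L : {vspace mat}) : Prop :=
  \dim P = 2%N /\ (P <= L)%VS.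

Definition quad_contains (A : mat) (V : {vspace vec}) : Prop :=
  forall v, v \in V -> qform A v = 0.

(* the quadric q_A is singular along V : the gradient (A + A^T) v of q_A
   vanishes at every point v of V *)
Definition quad_singular_along (A : mat) (V : {vspace vec}) : Prop :=
  forall v, v \in V -> (A + A^T) *m v = 0.

Definition sys_contains (S : {vspace mat}) (V : {vspace vec}) : Prop :=
  forall A, A \in S -> quad_contains A V.
Definition sys_singular_along (S : {vspace mat}) (V : {vspace vec}) : Prop :=
  forall A, A \in S -> quad_singular_along A V.

Definition complete_flag (Fl : nat -> {vspace vec}) : Prop :=
  (forall j, (j < 5)%N -> \dim (Fl j) = j.+1) /\
  (forall j, (j < 4)%N -> (Fl j <= Fl j.+1)%VS).

(* Monomials x_i x_j (i <= j) are pairs (i, j).  For a basis of linear forms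
   x_0..x_5 (the dual basis of the columns e_0..e_5 of an invertible g), the
   form q_A in the coordinates x is y |-> y^T (g^T A g) y; its coefficient
   on the monomial x_i x_j is the following. *)
Definition mcoef (m : 'I_6 * 'I_6) (B : mat) : F :=
  if m.1 == m.2 then B m.1 m.1 else B m.1 m.2 + B m.2 m.1.

Definition mweight (a : 'I_6 -> int) (m : 'I_6 * 'I_6) : int := a m.1 + a m.2.

(* The Pluecker coordinate x_{i1}x_{j1} /\ x_{i2}x_{j2} /\ x_{i3}x_{j3}
   (monomials m 0, m 1, m 2) does not vanish on L: the 3x3 minor of the
   coefficient matrix of (a basis of) L on these monomials is nonzero;
   equivalently some three elements of L give a nonzero minor. *)
Definition pluecker_nonzero (L : {vspace mat}) (g : mat)
    (m : 'I_3 -> 'I_6 * 'I_6) : Prop :=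
  exists Q : 'I_3 -> mat, (forall k, Q k \in L) /\
    \det (\matrix_(k, l) mcoef (m l) (g^T *m Q k *m g)) != 0.

(* L is stable w.r.t. the 1-PS acting diagonally with weights a on the basis
   x_0..x_5 of linear forms determined by g *)
Definition stable_wrt (L : {vspace mat}) (g : mat) (a : 'I_6 -> int) : Prop :=
  exists m : 'I_3 -> 'I_6 * 'I_6,
    (forall l, ((m l).1 <= (m l).2)%N) /\ injective m /\
    pluecker_nonzero L g m /\ 0 < \sum_(l < 3) mweight a (m l).

Definition not_stable_type (L : {vspace mat}) (a : 'I_6 -> int) : Prop :=
  exists g : mat, g \in unitmx /\ ~ stable_wrt L g a.

End Defs.

Definition numtype (s : seq int) : 'I_6 -> int := fun i => nth 0 s i.
Definition rho1 := numtype [:: 1; 1; 1; 1; 1; -5].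
Definition rho2 := numtype [:: 1; 1; 1; 1; -2; -2].
Definition rho3 := numtype [:: 1; 1; 1; -1; -1; -1].
Definition rho4 := numtype [:: 2; 2; -1; -1; -1; -1].
Definition rho5 := numtype [:: 5; -1; -1; -1; -1; -1].

(* A one-parameter subgroup of type rho_i has weight alpha on x_0, ..., x_j and
   beta < alpha on the other i = 5 - j coordinates, with zero sum.  The weight of
   a monomial x_a x_b is then determined by its level, the number of its
   variables outside x_0, ..., x_j, and a Pluecker coordinate has positive weight
   exactly when the levels of its three monomials add up to less than i.

   Picking greedily, among the coefficients of the quadrics of the net, three
   pivots of smallest possible level gives a nonvanishing Pluecker coordinate of
   minimal level sum t0 + t1 + t2; the whole net, a pencil in it and a quadric of
   that pencil have no coefficients below the levels t0, t1 and t2.  Having no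
   coefficient below level 1 (resp. 2) means containing (resp. being singular
   along) F_j.  Conversely, a d-dimensional subspace of the net without
   coefficients below level t forces d of the three monomials of any
   nonvanishing Pluecker coordinate to have level at least t.  The five
   conditions are the minimal triples t0 <= t1 <= t2 <= 2 of sum at least i. *)

From HB Require Import structures.
From mathcomp Require Import all_boot all_order all_algebra.
From mathcomp Require Import reals complex.
From mathcomp Require Import ring zify.
From Stdlib Require Import Classical_Prop Wf_nat.
Import Order.TTheory GRing.Theory Num.Theory.
Set Implicit Arguments. Unset Strict Implicit. Unset Printing Implicit Defensive.
Local Open Scope ring_scope.

Lemma exists_minimizer (T : Type) (P : T -> Prop) (r : T -> nat) :
  (exists x, P x) -> exists x, P x /\ forall y, P y -> (r x <= r y)%N.
Proof.
move=> [x Px].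
have [_ [[[y [Py <-]] miny] _]] := dec_inh_nat_subset_has_unique_least_element
  (fun k => exists y, P y /\ r y = k) (fun k => classic _)
  (ex_intro _ (r x) (ex_intro _ x (conj Px erefl))).
by exists y; split=> // z Pz; apply/ssrnat.leP/miny; exists z.
Qed.

Lemma sum3_ge (R : 'I_3 -> nat) (k1 k2 : 'I_3) t0 t1 t2 :
  k1 != k2 -> (forall k, t0 <= R k)%N -> (t1 <= R k1)%N -> (t2 <= R k2)%N ->
  (t0 + t1 + t2 <= \sum_k R k)%N.
Proof.
move=> k12 h0 h1 h2.
have [k0 /andP[k02 k01]] : exists k0 : 'I_3, (k0 != k2) && (k0 != k1).
  move: k12 (ltn_ord k1) (ltn_ord k2); rewrite -(inj_eq val_inj) /= => k12 lt1 lt2.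
  by exists (inord (3 - k1 - k2)); rewrite -!(inj_eq val_inj) /= inordK; lia.
rewrite (bigD1 k2) // (bigD1 k1) //= (bigD1 k0) /=; last by rewrite k02 k01.
have := h0 k0; lia.
Qed.

Local Notation mon := ('I_6 * 'I_6)%type.

Definition ordered_mon (m : mon) : bool := (m.1 <= m.2)%N.

Section QuadricNets.
Variable F : fieldType.
Hypothesis two_neq0 : (2%:R : F) != 0.
Local Notation mat := 'M[F]_6.
Local Notation vec := 'cV[F]_6.

Lemma double_eq0 (x : F) : (x *+ 2 == 0) = (x == 0).
Proof. by rewrite -mulr_natl mulf_eq0 (negbTE two_neq0). Qed.

(** * Coefficients of a quadric in a basis *)

Definition coef (g : mat) (m : mon) (A : mat) : F := mcoef m (g^T *m A *m g).

Lemma coef_is_linear g m : linear_for *%R (coef g m).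
Proof.
move=> c A B; rewrite /coef /mcoef mulmxDr mulmxDl -scalemxAr -scalemxAl.
case: ifP => _; rewrite !mxE // mulrDr; ring.
Qed.

HB.instance Definition _ g m :=
  GRing.isLinear.Build F mat F *%R (coef g m) (coef_is_linear g m).

Definition coefs (g : mat) (ms : seq mon) (A : mat) : 'rV[F]_(size ms) :=
  \row_i coef g (nth (ord0, ord0) ms i) A.

Lemma coefs_is_linear g ms : linear (coefs g ms).
Proof. by move=> c A B; apply/rowP => i; rewrite !mxE linearP. Qed.

HB.instance Definition _ g ms :=
  GRing.isLinear.Build F mat _ _ (coefs g ms) (coefs_is_linear g ms).

Lemma coef_span_eq0 g m (X : seq mat) A :
  {in X, forall Q, coef g m Q = 0} -> A \in <<X>>%VS -> coef g m A = 0.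
Proof.
move=> X0 /(@coord_span _ _ _ (in_tuple X)) ->; rewrite linear_sum big1 // => i _.
by rewrite linearZ /= X0 ?mulr0 // mem_nth.
Qed.

Lemma exists_coef_kernel g (U : {vspace mat}) (ms : seq mon) :
  (size ms < \dim U)%N ->
  exists2 A, A \in U & A != 0 /\ {in ms, forall m, coef g m A = 0}.
Proof.
move=> ltU; pose f := linfun (coefs g ms); set K := (U :&: lker f)%VS.
have dimK : (0 < \dim K)%N.
  have := limg_ker_dim f U; have : (\dim (f @: U) <= size ms)%N.
    by rewrite (leq_trans (dimvS (subvf _))) // dimvf /dim /= mul1n.
  move=> le_img dimU; rewrite -(ltn_add2r (\dim (f @: U))) add0n dimU.
  exact: leq_ltn_trans le_img ltU.
have /memv_capP[AU] := memv_pick K; rewrite memv_ker lfunE /= => /eqP fA0.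
exists (vpick K) => //; split; first by rewrite vpick0 -dimv_eq0 -lt0n.
move=> m ms_m; have lt_m : (index m ms < size ms)%N by rewrite index_mem.
have := congr1 (fun v : 'rV_(size ms) => v 0 (Ordinal lt_m)) fA0.
by rewrite !mxE /= nth_index.
Qed.

Definition gram (g A : mat) : mat := g^T *m (A + A^T) *m g.

Lemma gram_tr g A : (gram g A)^T = gram g A.
Proof. by rewrite /gram !trmx_mul trmxK linearD /= trmxK addrC mulmxA. Qed.

Lemma gram_sym (g A : mat) a b : gram g A a b = gram g A b a.
Proof. by rewrite -[in LHS]gram_tr mxE. Qed.

Lemma gram_entry g A a b :
  gram g A a b = ((col a g)^T *m (A + A^T) *m col b g) 0 0.
Proof. by rewrite tr_col -row_mul colE mulmxA -row_mul -colE !mxE. Qed.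

Lemma coef_eq0_gram g (a b : 'I_6) A : (coef g (a, b) A == 0) = (gram g A a b == 0).
Proof.
set B := g^T *m A *m g; have -> : gram g A = B + B^T.
  by rewrite /gram mulmxDr mulmxDl !trmx_mul trmxK mulmxA.
rewrite /coef /mcoef /= -/B [(B + B^T) _ _]mxE [B^T _ _]mxE.
by case: (a =P b) => [<-|//]; rewrite -mulr2n double_eq0.
Qed.

Lemma coef_sym_eq0 g A : g \in unitmx -> A^T = A ->
  (forall m, ordered_mon m -> coef g m A = 0) -> A = 0.
Proof.
move=> gu As coef0; have gTu : g^T \in unitmx by rewrite unitmx_tr.
have G0 : gram g A = 0.
  apply/matrixP => a b; rewrite [RHS]mxE.
  wlog ab : a b / (a <= b)%N => [hw|].
    by case: (leqP a b) => [/hw//|/ltnW/hw]; rewrite gram_sym.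
  by apply/eqP; rewrite -coef_eq0_gram; apply/eqP/coef0.
have AA0 : A + A = 0.
  rewrite -{2}As -[A + A^T](mulKmx gTu) -[_ *m (A + A^T)](mulmxK gu).
  by rewrite -/(gram g A) G0 mul0mx mulmx0.
apply/matrixP => x y; rewrite [RHS]mxE; apply/eqP; rewrite -double_eq0 mulr2n.
by have := congr1 (fun M : mat => M x y) AA0; rewrite !mxE => ->.
Qed.

Lemma qform_mul2 (A : mat) (v : vec) :
  qform A v *+ 2 = (v^T *m (A + A^T) *m v) 0 0.
Proof.
rewrite /qform mulmxDr mulmxDl [(v^T *m A *m v + _) 0 0]mxE -[v^T *m A^T *m v]trmxK.
by rewrite [_^T 0 0]mxE !trmx_mul !trmxK mulmxA mulr2n.
Qed.

Lemma qformD (A : mat) (u w : vec) :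
  qform A (u + w) = qform A u + qform A w + (u^T *m (A + A^T) *m w) 0 0.
Proof.
have swap : w^T *m A *m u = u^T *m A^T *m w.
  apply/matrixP => i k; rewrite !ord1 -[w^T *m A *m u]trmxK [_^T 0 0]mxE.
  by rewrite !trmx_mul !trmxK mulmxA.
have trD : (u + w)^T = u^T + w^T by apply/matrixP => i k; rewrite !mxE.
rewrite /qform; suff -> : (u + w)^T *m A *m (u + w) =
  u^T *m A *m u + w^T *m A *m w + u^T *m (A + A^T) *m w by rewrite !mxE.
rewrite trD !mulmxDl !mulmxDr swap mulmxDl -!addrA; congr (_ + _).
by rewrite [RHS]addrC -addrA.
Qed.

Lemma contains_gram (g A : mat) (V : {vspace vec}) a b :
  quad_contains A V -> col a g \in V -> col b g \in V -> gram g A a b = 0.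
Proof.
move=> hA aV bV; rewrite gram_entry -[RHS](hA _ (memvD aV bV)) qformD.
by rewrite (hA _ aV) (hA _ bV) !add0r.
Qed.

Lemma singular_gram (g A : mat) (V : {vspace vec}) a b :
  quad_singular_along A V -> col b g \in V -> gram g A a b = 0.
Proof. by move=> hA bV; rewrite gram_entry -mulmxA (hA _ bV) mulmx0 mxE. Qed.

Lemma singular_contains (A : mat) (V : {vspace vec}) :
  quad_singular_along A V -> quad_contains A V.
Proof.
move=> hA v vV; apply/eqP; rewrite -double_eq0.
by rewrite qform_mul2 -mulmxA (hA v vV) mulmx0 mxE.
Qed.

(** * The flag of a basis and the level of a monomial *)

(* [col_flag g j] is F_j = {x_(j+1) = ... = x_5 = 0} for the coordinates x dual
   to the columns of [g]. *)
Definition col_flag (g : mat) (j : nat) : {vspace vec} :=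
  <<[tuple col (inord i) g | i < j.+1]>>%VS.

Lemma col_flag_col (g : mat) j (c : 'I_6) : (c <= j)%N -> col c g \in col_flag g j.
Proof.
move=> cj; apply: memv_span; apply/mapP.
exists (Ordinal (cj : (c < j.+1)%N)); first by rewrite val_ord_tuple mem_enum.
by rewrite /= inord_val.
Qed.

Lemma nth_col_flag (g : mat) j (i : 'I_j.+1) :
  [tuple col (inord k) g | k < j.+1]`_i = col (inord i) g.
Proof. by rewrite (nth_map ord0) ?size_enum_ord // nth_ord_enum. Qed.

Lemma invmx_col (g : mat) (c : 'I_6) : g \in unitmx -> invmx g *m col c g = delta_mx c 0.
Proof. by move=> gu; rewrite colE mulmxA mulVmx // mul1mx. Qed.

Lemma col_flag_coord (g : mat) j (v : vec) : g \in unitmx -> v \in col_flag g j ->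
  forall c : 'I_6, (j < c)%N -> (invmx g *m v) c 0 = 0.
Proof.
move=> gu /coord_span -> c jc; rewrite mulmx_sumr summxE big1 // => i _.
rewrite nth_col_flag -scalemxAr invmx_col // !mxE; case: eqP => [ci|_]; last first.
  by rewrite mulr0.
have i6 : (i < 6)%N by have := ltn_ord i; have := ltn_ord c; lia.
by move: jc; rewrite ci inordK //; have := ltn_ord i; lia.
Qed.

Lemma col_flag_mul (g : mat) j (v : vec) : g \in unitmx -> v \in col_flag g j ->
  exists2 y : vec, v = g *m y & forall c : 'I_6, (j < c)%N -> y c 0 = 0.
Proof.
by move=> gu vF; exists (invmx g *m v); [rewrite mulKVmx | exact: col_flag_coord].
Qed.

Lemma gram_contains (g A : mat) j : g \in unitmx ->
  (forall a b : 'I_6, (a <= j)%N -> (b <= j)%N -> gram g A a b = 0) ->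
  quad_contains A (col_flag g j).
Proof.
move=> gu h v /(col_flag_mul gu) [y -> y0]; apply/eqP; rewrite -double_eq0 qform_mul2.
have -> : (g *m y)^T *m (A + A^T) *m (g *m y) = y^T *m gram g A *m y.
  by rewrite /gram trmx_mul !mulmxA.
rewrite mxE big1 // => b _; have [bj|jb] := leqP b j; last by rewrite y0 ?mulr0.
rewrite mxE big1 ?mul0r // => a _; have [aj|ja] := leqP a j; last first.
  by rewrite mxE y0 ?mul0r.
by rewrite h ?mulr0.
Qed.

Lemma gram_singular (g A : mat) j : g \in unitmx ->
  (forall a b : 'I_6, (b <= j)%N -> gram g A a b = 0) ->
  quad_singular_along A (col_flag g j).
Proof.
move=> gu h v /(col_flag_mul gu) [y -> y0].
have gTu : g^T \in unitmx by rewrite unitmx_tr.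
rewrite -[_ *m (g *m y)](mulKmx gTu).
suff -> : g^T *m ((A + A^T) *m (g *m y)) = 0 by rewrite mulmx0.
rewrite !mulmxA -/(gram g A); apply/colP => a; rewrite [LHS]mxE [RHS]mxE.
by rewrite big1 // => b _; have [/h->|/y0->] := leqP b j; rewrite ?mul0r ?mulr0.
Qed.

Lemma free_col_flag (g : mat) j : g \in unitmx -> (j < 6)%N ->
  free [tuple col (inord i) g | i < j.+1].
Proof.
move=> gu j6; apply/freeP => k sum0 i.
have /(congr1 (fun v : vec => (invmx g *m v) (inord i) 0)) := sum0.
rewrite mulmx0 mulmx_sumr summxE [(0 : vec) _ _]mxE (bigD1 i) //= big1 ?addr0.
  by rewrite nth_col_flag -scalemxAr invmx_col // !mxE eqxx mulr1.
move=> l li; rewrite nth_col_flag -scalemxAr invmx_col // !mxE.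
suff /negbTE-> : inord i != inord l :> 'I_6 by rewrite mulr0.
apply: contra li => /eqP/(congr1 val); rewrite /= !inordK => [/val_inj->//||];
  exact: leq_trans (ltn_ord _) j6.
Qed.

Lemma col_flag_complete (g : mat) : g \in unitmx -> complete_flag (col_flag g).
Proof.
move=> gu; split=> [j j5|j j4].
  by have /eqP-> := free_col_flag gu (ltnW j5); rewrite size_tuple.
apply/span_subvP => _ /mapP[i _ ->]; apply: col_flag_col.
by rewrite inordK; have := ltn_ord i; lia.
Qed.

Lemma unitmx_of_ker0 n (g : 'M[F]_n) :
  (forall v : 'cV_n, g *m v = 0 -> v = 0) -> g \in unitmx.
Proof.
move=> ker0; rewrite -unitmx_tr -row_free_unit; apply: inj_row_free => v vg0.
apply: trmx_inj; rewrite trmx0; apply: ker0.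
by rewrite -(trmxK g) -trmx_mul vg0 trmx0.
Qed.

Lemma exists_adapted_basis j (V : {vspace vec}) : (j < 6)%N -> \dim V = j.+1 ->
  exists2 g : mat, g \in unitmx & forall c : 'I_6, (c <= j)%N -> col c g \in V.
Proof.
move=> j6 dimV; set X := vbasis V ++ vbasis V^C.
have /eqP sizeX : size X = 6%N.
  by rewrite size_cat !size_tuple dimv_compl dimvf dimV subnKC.
have freeX : free (Tuple sizeX).
  rewrite /= cat_free !(basis_free (vbasisP _)) /= !(span_basis (vbasisP _)).
  by apply/directv_addP; rewrite capv_compl.
pose g : mat := \matrix_(i, c) X`_c i 0.
have col_g c : col c g = X`_c by apply/colP => i; rewrite !mxE.
exists g => [|c cj].
  apply: unitmx_of_ker0 => y gy0; apply/colP => c; rewrite mxE.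
  apply: (freeP freeX (fun c => y c 0)); rewrite -[RHS]gy0.
  by apply/colP => i; rewrite summxE !mxE; apply: eq_bigr => k _; rewrite !mxE mulrC.
have cV : (c < \dim V)%N by rewrite dimV ltnS.
by rewrite col_g nth_cat size_tuple cV vbasis_mem ?mem_nth ?size_tuple.
Qed.

Definition level (j : nat) (m : mon) : nat := (j < m.1)%N + (j < m.2)%N.

Definition vanishes_below (g : mat) (r : mon -> nat) (t : nat) (A : mat) :=
  forall m, ordered_mon m -> (r m < t)%N -> coef g m A = 0.

Lemma vanishes_below1 (g A : mat) j : vanishes_below g (level j) 1 A <->
  forall a b : 'I_6, (a <= j)%N -> (b <= j)%N -> gram g A a b = 0.
Proof.
split=> [van a b aj bj|h [a b] ab lt]; apply/eqP; rewrite ?coef_eq0_gram.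
  wlog ab : a b aj bj / (a <= b)%N => [hw|].
    by case: (leqP a b) => [/hw//|/ltnW/hw]; rewrite gram_sym; apply.
  by rewrite -coef_eq0_gram; apply/eqP/van; rewrite /ordered_mon /level /=; lia.
by rewrite h //; move: ab lt; rewrite /ordered_mon /level /=; lia.
Qed.

Lemma vanishes_below2 (g A : mat) j : vanishes_below g (level j) 2 A <->
  forall a b : 'I_6, (b <= j)%N -> gram g A a b = 0.
Proof.
split=> [van a b bj|h [a b] ab lt]; apply/eqP; rewrite ?coef_eq0_gram; last first.
  by rewrite gram_sym h //; move: ab lt; rewrite /ordered_mon /level /=; lia.
have [ab|ba] := leqP a b; last rewrite gram_sym.
all: by rewrite -coef_eq0_gram; apply/eqP/van; rewrite /ordered_mon /level /=; lia.
Qed.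

Definition quad_mult_ge (A : mat) (V : {vspace vec}) (t : nat) : Prop :=
  match t with 0 => True | 1 => quad_contains A V | _ => quad_singular_along A V end.

Definition sys_mult_ge (S : {vspace mat}) (V : {vspace vec}) (t : nat) : Prop :=
  forall A, A \in S -> quad_mult_ge A V t.

Lemma quad_mult_ge_le (A : mat) (V : {vspace vec}) s t :
  (s <= t)%N -> quad_mult_ge A V t -> quad_mult_ge A V s.
Proof. by case: s t => [|[|s]] [|[|t]] //= _; apply: singular_contains. Qed.

Lemma sys_mult_ge_le (S : {vspace mat}) (V : {vspace vec}) s t :
  (s <= t)%N -> sys_mult_ge S V t -> sys_mult_ge S V s.
Proof. by move=> st hS A AS; apply: quad_mult_ge_le st (hS A AS). Qed.

Lemma sys_mult_ge_subv (P S : {vspace mat}) (V : {vspace vec}) t :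
  (P <= S)%VS -> sys_mult_ge S V t -> sys_mult_ge P V t.
Proof. by move=> PS hS A AP; apply: hS (subvP PS _ AP). Qed.

Lemma mult_ge_vanishes_below (g A : mat) j (V : {vspace vec}) t :
  (forall c : 'I_6, (c <= j)%N -> col c g \in V) -> (t <= 2)%N ->
  quad_mult_ge A V t -> vanishes_below g (level j) t A.
Proof.
move=> colV; case: t => [|[|[|//]]] _ /= hA.
- by [].
- by apply/vanishes_below1 => a b aj bj; apply: contains_gram hA (colV a aj) (colV b bj).
- by apply/vanishes_below2 => a b bj; apply: singular_gram hA (colV b bj).
Qed.

Lemma vanishes_below_mult_ge (g A : mat) j t : g \in unitmx ->
  vanishes_below g (level j) t A -> quad_mult_ge A (col_flag g j) t.
Proof.
case: t => [|[|t]] gu van //=.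
  by apply: gram_contains => //; apply/vanishes_below1.
apply: gram_singular => //; apply/vanishes_below2 => m om lt.
exact: van (leq_trans lt _).
Qed.

(** * Pluecker coordinates and greedy pivots *)

Lemma pencil_has_nonzero (P L : {vspace mat}) :
  is_pencil_in P L -> exists2 A, A \in P & A != 0.
Proof. by case=> dP _; exists (vpick P); rewrite ?memv_pick // vpick0 -dimv_eq0 dP. Qed.

Lemma pencil_of_free2 (L : {vspace mat}) (A B : mat) : A \in L -> B \in L ->
  A \notin <[B]>%VS -> B != 0 -> is_pencil_in <<[:: A; B]>>%VS L.
Proof.
move=> AL BL AB B0; split.
  by have /eqP-> : free [:: A; B] by rewrite free_cons span_seq1 AB seq1_free.
by apply/span_subvP => C; rewrite !inE => /orP[]/eqP->.
Qed.

Lemma exists_pencil_through (L : {vspace mat}) A :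
  \dim L = 3 -> A \in L -> exists2 P, is_pencil_in P L & A \in P.
Proof.
move=> dL AL; pose A' := if A == 0 then vpick L else A.
have A'L : A' \in L by rewrite /A'; case: (A =P 0) => _; rewrite ?memv_pick.
have A'0 : A' != 0.
  by rewrite /A'; case: (A =P 0) => [_|/eqP //]; rewrite vpick0 -dimv_eq0 dL.
have /subvPn[B BL BA'] : ~~ (L <= <[A']>)%VS.
  by apply: contraTN isT => /dimvS; rewrite dL dim_vline A'0.
exists <<[:: B; A']>>%VS; first exact: pencil_of_free2.
rewrite /A'; case: (A =P 0) => [->|_]; first exact: mem0v.
by rewrite memv_span // !inE eqxx orbT.
Qed.

Section Pluecker.
Variables (g : mat) (L : {vspace mat}) (m : 'I_3 -> mon) (Q : 'I_3 -> mat).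
Hypotheses (dimL : \dim L = 3%N) (QL : forall k, Q k \in L)
  (detM : \det (\matrix_(k, l) mcoef (m l) (g^T *m Q k *m g)) != 0)
  (m_ordered : forall l, ordered_mon (m l)).

Let pluecker_comb_eq0 (x : 'I_3 -> F) :
  (forall l, coef g (m l) (\sum_k x k *: Q k) = 0) -> forall k, x k = 0.
Proof.
move=> h; set M := \matrix_(k, l) coef g (m l) (Q k).
have Mu : M \in unitmx by rewrite unitmxE unitfE.
have xM0 : \row_k x k *m M = 0.
  apply/rowP => l; rewrite !mxE -[RHS](h l) linear_sum.
  by apply: eq_bigr => k _; rewrite !mxE linearZ.
move=> k; have /rowP/(_ k) := congr1 (mulmx^~ (invmx M)) xM0.
by rewrite /= mulmxK // mul0mx !mxE.
Qed.

Lemma pluecker_coef_eq0 A : A \in L -> (forall l, coef g (m l) A = 0) -> A = 0.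
Proof.
pose X := [tuple Q k | k < 3].
have XQ (k : 'I_3) : X`_k = Q k by rewrite -tnth_nth tnth_mktuple.
have freeX : free X.
  apply/freeP => x sum0; apply: pluecker_comb_eq0 => l.
  have -> : \sum_k x k *: Q k = 0 by rewrite -[RHS]sum0; apply: eq_bigr => k _; rewrite XQ.
  exact: linear0.
have spanX : <<X>>%VS = L.
  apply/eqP; rewrite eqEdim dimL (eqP freeX) size_tuple leqnn andbT.
  by apply/span_subvP => _ /mapP[k _ ->].
move=> AL hA; rewrite -spanX in AL; rewrite (coord_span AL) big1 // => k _.
rewrite (pluecker_comb_eq0 (x := fun k => coord X k A)) ?scale0r // => l.
by rewrite -(hA l) [in RHS](coord_span AL); congr coef; apply: eq_bigr => i _; rewrite XQ.
Qed.

Lemma pluecker_level_bound (r : mon -> nat) t (U : {vspace mat}) (S : {set 'I_3}) :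
  (U <= L)%VS -> (#|S| < \dim U)%N -> (forall A, A \in U -> vanishes_below g r t A) ->
  exists2 l, l \notin S & (t <= r (m l))%N.
Proof.
move=> UL ltS van.
have ltU : (size [seq m l | l in S] < \dim U)%N by rewrite size_image.
have [A AU [A0 AS]] := exists_coef_kernel g ltU.
have [l Al] : exists l, coef g (m l) A != 0.
  apply/existsP; apply: contraNT A0 => /existsPn Am0; apply/eqP.
  by apply: pluecker_coef_eq0 (subvP UL _ AU) _ => l; apply/eqP/negPn/Am0.
exists l; first by apply: contraNN Al => lS; rewrite AS ?image_f.
by rewrite leqNgt; apply: contraNN Al => lt; apply/eqP/(van A AU _ (m_ordered l) lt).
Qed.

End Pluecker.

Lemma pluecker_nonzero_inj (L : {vspace mat}) (g : mat) (m : 'I_3 -> mon) :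
  pluecker_nonzero L g m -> injective m.
Proof.
case=> Q [_ detM] l l' ml; apply/eqP; apply: contraTT detM => ll'.
by rewrite negbK -det_tr (determinant_alternate ll') // => k; rewrite !mxE ml.
Qed.

Lemma pluecker_trig (L : {vspace mat}) (g : mat) (m : 'I_3 -> mon) (Q : 'I_3 -> mat) :
  (forall k, Q k \in L) -> (forall k, coef g (m k) (Q k) != 0) ->
  (forall k l : 'I_3, (l < k)%N -> coef g (m l) (Q k) = 0) -> pluecker_nonzero L g m.
Proof.
move=> QL diag0 low0; exists Q; split=> //; rewrite -det_tr det_trig.
  by apply/prodf_neq0 => k _; rewrite 2!mxE; apply: diag0.
by apply/is_trig_mxP => l k lk; rewrite 2!mxE; apply: low0.
Qed.

Section Pivots.
Variables (g : mat) (r : mon -> nat).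
Hypothesis g_unit : g \in unitmx.

Lemma exists_min_pivot (P : mat -> Prop) :
  (forall A, P A -> A^T = A) -> (exists2 A, P A & A != 0) ->
  exists m Q, [/\ ordered_mon m, P Q, coef g m Q != 0 &
                  forall A, P A -> vanishes_below g r (r m) A].
Proof.
move=> Psym [A PA A0].
have /existsP[m0 /andP[om0 Am0]] : [exists m, ordered_mon m && (coef g m A != 0)].
  apply: contraNT A0 => /existsPn Am; apply/eqP/(coef_sym_eq0 g_unit (Psym _ PA)) => m om.
  by apply/eqP; have := Am m; rewrite om negbK.
pose good mQ := [/\ ordered_mon mQ.1, P mQ.2 & coef g mQ.1 mQ.2 != 0].
have [[m Q] [[om PQ Qm] minm]] := @exists_minimizer _ good (fun mQ => r mQ.1)
  (ex_intro _ (m0, A) (And3 om0 PA Am0)).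
exists m, Q; split=> // B PB m' om' lt; apply/eqP; apply: contraTT lt => Bm'.
by rewrite -leqNgt; apply: (minm (m', B)).
Qed.

Lemma net_pivots (L : {vspace mat}) : is_net L ->
  exists (m0 m1 m2 : mon) (P : {vspace mat}) (A : mat),
  [/\ ordered_mon m0, ordered_mon m1, ordered_mon m2 &
      pluecker_nonzero L g (tnth [tuple m0; m1; m2])] /\
  (r m0 <= r m1 <= r m2)%N /\
  [/\ forall B, B \in L -> vanishes_below g r (r m0) B, is_pencil_in P L,
      forall B, B \in P -> vanishes_below g r (r m1) B,
      A \in P & A != 0 /\ vanishes_below g r (r m2) A].
Proof.
case=> dimL Lsym.
have small (ms : seq mon) : (size ms < 3)%N -> (size ms < \dim L)%N by rewrite dimL.
have [A0 A0L [A0_0 _]] := exists_coef_kernel g (small [::] isT).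
have [m0 [Q0 [om0 Q0L Q0m0 min0]]] :=
  @exists_min_pivot (fun A => A \in L) Lsym (ex_intro2 _ _ A0 A0L A0_0).
have [A1 A1L [A1_0 A1m]] := exists_coef_kernel g (small [:: m0] isT).
have [m1 [Q1 [om1 [Q1L Q1m0] Q1m1 min1]]] :=
  @exists_min_pivot (fun A => A \in L /\ coef g m0 A = 0) (fun A PA => Lsym A PA.1)
    (ex_intro2 _ _ A1 (conj A1L (A1m _ (mem_head _ _))) A1_0).
have [A2 A2L [A2_0 A2m]] := exists_coef_kernel g (small [:: m0; m1] isT).
have [m2 [Q2 [om2 [Q2L Q2m0 Q2m1] Q2m2 min2]]] :=
  @exists_min_pivot (fun A => [/\ A \in L, coef g m0 A = 0 & coef g m1 A = 0])
    (fun A '(And3 AL _ _) => Lsym A AL)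
    (ex_intro2 _ _ A2 (And3 A2L (A2m _ (mem_head _ _)) (A2m _ (mem_last _ _))) A2_0).
have Q2_0 : Q2 != 0 by apply: contraNneq Q2m2 => ->; rewrite linear0.
have pencilP : is_pencil_in <<[:: Q1; Q2]>>%VS L.
  apply: pencil_of_free2 => //; apply: contraNN Q1m1 => /vlineP[c ->].
  by rewrite linearZ /= Q2m1 mulr0.
exists m0, m1, m2, <<[:: Q1; Q2]>>%VS, Q2; split; [split=> //|split].
- apply: (@pluecker_trig _ _ _ (tnth [tuple Q0; Q1; Q2])).
  + by case=> [[|[|[|//]]] ?]; rewrite !(tnth_nth 0).
  + by case=> [[|[|[|//]]] ?]; rewrite !(tnth_nth 0).
  + by case=> [[|[|[|//]]] ?] [[|[|[|//]]] ?] // _; rewrite !(tnth_nth 0).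
- apply/andP; split; rewrite leqNgt.
    by apply: contraNN Q1m1 => lt; apply/eqP/(min0 _ Q1L _ om1 lt).
  by apply: contraNN Q2m2 => lt; apply/eqP/(min1 _ (conj Q2L Q2m0) _ om2 lt).
split=> //.
- move=> B BP; apply: min1; split; first exact: subvP (proj2 pencilP) _ BP.
  by apply: coef_span_eq0 BP => Q; rewrite !inE => /orP[]/eqP->.
- by rewrite memv_span // !inE eqxx orbT.
- by split; last exact: min2.
Qed.

End Pivots.

(** * One-parameter subgroups with two weights *)

Definition destabilizing (L : {vspace mat}) (V : {vspace vec}) (n : nat) : Prop :=
  exists t0 t1 t2 : nat,
  [/\ (t0 <= t1 <= t2)%N, (t2 <= 2)%N & (n <= t0 + t1 + t2)%N] /\
  exists P, [/\ is_pencil_in P L, sys_mult_ge L V t0, sys_mult_ge P V t1 &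
    exists2 A, A \in P & A != 0 /\ quad_mult_ge A V t2].

Lemma destabilizing_level_sum (L : {vspace mat}) (g : mat) (V : {vspace vec}) j n
    (m : 'I_3 -> mon) :
  \dim L = 3%N -> (forall c : 'I_6, (c <= j)%N -> col c g \in V) ->
  (forall l, ordered_mon (m l)) -> pluecker_nonzero L g m ->
  destabilizing L V n -> (n <= \sum_l level j (m l))%N.
Proof.
move=> dimL colV om [Q [QL detM]].
move=> [t0 [t1 [t2 [[/andP[t01 t12] t2le tsum] [P [[dimP PL] hL hP [A AP [A0 hA]]]]]]]].
have van U t : (t <= 2)%N -> sys_mult_ge U V t ->
    forall B, B \in U -> vanishes_below g (level j) t B.
  by move=> tle hU B BU; apply: mult_ge_vanishes_below colV tle (hU B BU).
have [k2 _ k2t] : exists2 k, k \notin set0 & (t2 <= level j (m k))%N.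
  apply: (pluecker_level_bound dimL QL detM om (U := <[A]>%VS)).
  - by rewrite -memvE (subvP PL).
  - by rewrite cards0 dim_vline A0.
  move=> _ /vlineP[c ->] m' om' lt.
  by rewrite linearZ /= (mult_ge_vanishes_below colV t2le hA) ?mulr0.
have [k1 k1k2 k1t] : exists2 k, k \notin [set k2] & (t1 <= level j (m k))%N.
  apply: (pluecker_level_bound dimL QL detM om PL); first by rewrite cards1 dimP.
  by apply: van; [exact: leq_trans t12 t2le | exact: hP].
have t0_le k : (t0 <= level j (m k))%N.
  have [l] : exists2 l, l \notin [set~ k] & (t0 <= level j (m l))%N.
    apply: (pluecker_level_bound dimL QL detM om (subvv L)).
      by rewrite cardsC1 card_ord dimL.
    by apply: van; [exact: leq_trans t01 (leq_trans t12 t2le) | exact: hL].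
  by rewrite !inE negbK => /eqP->.
by apply: leq_trans tsum (sum3_ge _ t0_le k1t k2t); rewrite inE in k1k2.
Qed.

Section TwoLevel.
Variables (j n : nat) (alpha beta : int) (a : 'I_6 -> int).
Hypotheses (a_def : forall i : 'I_6, a i = if (i <= j)%N then alpha else beta)
  (j_lt5 : (j < 5)%N) (jn : (j + n = 5)%N)
  (balanced : (j.+1)%:Z * alpha + n%:Z * beta = 0) (beta_lt : beta < alpha).

Lemma mweight_level m : mweight a m = alpha *+ 2 - (alpha - beta) * (level j m)%:Z.
Proof. by rewrite /mweight !a_def /level; case: leqP => _; case: leqP => _ /=; ring. Qed.

Lemma weight_sum_gt0 (m : 'I_3 -> mon) :
  (0 < \sum_(l < 3) mweight a (m l)) = (\sum_(l < 3) level j (m l) < n)%N.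
Proof.
have -> : \sum_(l < 3) mweight a (m l) =
    (alpha - beta) * (n%:Z - (\sum_(l < 3) level j (m l))%:Z).
  have j1 : (j.+1)%:Z = 6 - n%:Z by lia.
  rewrite !big_ord_recr !big_ord0 /= !mweight_level !PoszD.
  by apply/eqP; rewrite -subr_eq0 -[X in _ == X]balanced j1; apply/eqP; ring.
by rewrite pmulr_rgt0 ?subr_gt0 ?ltz_nat.
Qed.

Lemma not_stable_destabilizing (L : {vspace mat}) : is_net L ->
  not_stable_type L a -> exists Fl, complete_flag Fl /\ destabilizing L (Fl j) n.
Proof.
move=> netL [g [gu unstable]].
have [m0 [m1 [m2 [P [A [[om0 om1 om2 plk] [sorted [hL pP hP AP [A0 hA]]]]]]]]] :=
  net_pivots (level j) gu netL.
exists (col_flag g); split; first exact: col_flag_complete.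
exists (level j m0), (level j m1), (level j m2); split.
  split=> //; first by rewrite /level; lia.
  rewrite leqNgt; apply/negP => lt; apply: unstable.
  exists (tnth [tuple m0; m1; m2]); split; first by case=> [[|[|[|//]]] ?].
  split; first exact: pluecker_nonzero_inj plk.
  split=> //; rewrite weight_sum_gt0.
  by rewrite !big_ord_recr big_ord0 /= !(tnth_nth 0).
exists P; split=> //.
- by move=> B BL; apply: vanishes_below_mult_ge (hL B BL).
- by move=> B BP; apply: vanishes_below_mult_ge (hP B BP).
- by exists A; last split; last exact: vanishes_below_mult_ge.
Qed.

Lemma destabilizing_not_stable (L : {vspace mat}) Fl : is_net L -> complete_flag Fl ->
  destabilizing L (Fl j) n -> not_stable_type L a.
Proof.
move=> [dimL _] [dimFl _] destab.
have [g gu colV] := exists_adapted_basis (ltnW j_lt5) (dimFl j j_lt5).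
exists g; split=> // -[m [om [_ [plk]]]].
rewrite weight_sum_gt0 ltnNge => /negP; apply.
exact: destabilizing_level_sum dimL colV om plk destab.
Qed.

Theorem not_stable_two_level (L : {vspace mat}) (C : {vspace vec} -> Prop) :
  is_net L -> (forall V, destabilizing L V n <-> C V) ->
  (not_stable_type L a <-> exists Fl, complete_flag Fl /\ C (Fl j)).
Proof.
move=> netL destabC; split.
  by case/not_stable_destabilizing=> // Fl [flag /destabC]; exists Fl.
by case=> Fl [flag /destabC]; apply: destabilizing_not_stable flag.
Qed.

End TwoLevel.

Section DestabilizingConditions.
Variables (L : {vspace mat}) (V : {vspace vec}).
Hypothesis dimL : \dim L = 3%N.

Lemma destabilizing1 :
  destabilizing L V 1 <-> exists A, [/\ A \in L, A != 0 & quad_contains A V].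
Proof.
split=> [[t0 [t1 [t2 [[/andP[t01 t12] _ tsum] [P [[_ PL] _ _ [A AP [A0 hA]]]]]]]]|].
  exists A; split=> //; first exact: subvP PL _ AP.
  by apply: (@quad_mult_ge_le _ _ 1 t2) hA; lia.
case=> A [AL A0 hA]; have [P pP AP] := exists_pencil_through dimL AL.
by exists 0%N, 0%N, 1%N; split=> //; exists P; split=> //; exists A.
Qed.

Lemma destabilizing2 : destabilizing L V 2 <->
  (exists P, is_pencil_in P L /\ sys_contains P V) \/
  (exists A, [/\ A \in L, A != 0 & quad_singular_along A V]).
Proof.
split=> [[t0 [t1 [t2 [[/andP[t01 t12] t2le tsum] [P [pP _ hP [A AP [A0 hA]]]]]]]]|].
  have [t1ge|t1lt] := leqP 1 t1.
    by left; exists P; split=> //; apply: (@sys_mult_ge_le _ _ 1 t1) hP.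
  right; exists A; split=> //; first exact: subvP (proj2 pP) _ AP.
  by apply: (@quad_mult_ge_le _ _ 2 t2) hA; lia.
case=> [[P [pP hP]]|[A [AL A0 hA]]].
  have [A AP A0] := pencil_has_nonzero pP.
  exists 0%N, 1%N, 1%N; split=> //; exists P; split=> //.
  by exists A => //; split=> //; apply: hP.
have [P pP AP] := exists_pencil_through dimL AL.
by exists 0%N, 0%N, 2%N; split=> //; exists P; split=> //; exists A.
Qed.

Lemma destabilizing3 : destabilizing L V 3 <->
  sys_contains L V \/
  (exists P, [/\ is_pencil_in P L, sys_contains P V &
     exists A, [/\ A \in P, A != 0 & quad_singular_along A V]]).
Proof.
split=> [[t0 [t1 [t2 [[/andP[t01 t12] t2le tsum] [P [pP hL hP [A AP [A0 hA]]]]]]]]|].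
  have [t0ge|t0lt] := leqP 1 t0; first by left; apply: (@sys_mult_ge_le _ _ 1 t0).
  right; exists P; split=> //; first by apply: (@sys_mult_ge_le _ _ 1 t1) hP; lia.
  by exists A; split=> //; apply: (@quad_mult_ge_le _ _ 2 t2) hA; lia.
case=> [hL|[P [pP hP [A [AP A0 hA]]]]].
  have [P pP _] := exists_pencil_through dimL (mem0v L).
  have [A AP A0] := pencil_has_nonzero pP.
  have hP := @sys_mult_ge_subv P L V 1 (proj2 pP) hL.
  exists 1%N, 1%N, 1%N; split=> //; exists P; split=> //.
  by exists A => //; split=> //; apply: hP.
by exists 0%N, 1%N, 2%N; split=> //; exists P; split=> //; exists A.
Qed.

Lemma destabilizing4 : destabilizing L V 4 <->
  (sys_contains L V /\ exists A, [/\ A \in L, A != 0 & quad_singular_along A V]) \/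
  (exists P, is_pencil_in P L /\ sys_singular_along P V).
Proof.
split=> [[t0 [t1 [t2 [[/andP[t01 t12] t2le tsum] [P [pP hL hP [A AP [A0 hA]]]]]]]]|].
  have [t0ge|t0lt] := leqP 1 t0.
    left; split; first exact: (@sys_mult_ge_le _ _ 1 t0).
    exists A; split=> //; first exact: subvP (proj2 pP) _ AP.
    by apply: (@quad_mult_ge_le _ _ 2 t2) hA; lia.
  by right; exists P; split=> //; apply: (@sys_mult_ge_le _ _ 2 t1) hP; lia.
case=> [[hL [A [AL A0 hA]]]|[P [pP hP]]].
  have [P pP AP] := exists_pencil_through dimL AL.
  exists 1%N, 1%N, 2%N; split=> //; exists P; split=> //; last by exists A.
  exact: (@sys_mult_ge_subv P L V 1 (proj2 pP) hL).
have [A AP A0] := pencil_has_nonzero pP.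
exists 0%N, 2%N, 2%N; split=> //; exists P; split=> //.
by exists A => //; split=> //; apply: hP.
Qed.

Lemma destabilizing5 : destabilizing L V 5 <->
  sys_contains L V /\ exists P, is_pencil_in P L /\ sys_singular_along P V.
Proof.
split=> [[t0 [t1 [t2 [[/andP[t01 t12] t2le tsum] [P [pP hL hP _]]]]]]|[hL [P [pP hP]]]].
  split; first by apply: (@sys_mult_ge_le _ _ 1 t0) hL; lia.
  by exists P; split=> //; apply: (@sys_mult_ge_le _ _ 2 t1) hP; lia.
have [A AP A0] := pencil_has_nonzero pP.
exists 1%N, 2%N, 2%N; split=> //; exists P; split=> //.
by exists A => //; split=> //; apply: hP.
Qed.

End DestabilizingConditions.

End QuadricNets.

Lemma numtype_two_level (j n : nat) (alpha beta : int) : (j + n = 5)%N ->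
  forall i : 'I_6,
  numtype (nseq j.+1 alpha ++ nseq n beta) i = if (i <= j)%N then alpha else beta.
Proof.
move=> jn i; rewrite /numtype nth_cat size_nseq ltnS.
case: ifP => ij; rewrite nth_nseq; first by rewrite ltnS ij.
by rewrite ifT //; move: ij (ltn_ord i); lia.
Qed.

Theorem lemma2p2 (R : realType) (L : {vspace 'M[R[i]]_6}) :
  is_net L ->
  (not_stable_type L rho1 <->
     exists Fl, complete_flag Fl /\
       exists A, [/\ A \in L, A != 0 & quad_contains A (Fl 4%N)])
  /\
  (not_stable_type L rho2 <->
     exists Fl, complete_flag Fl /\
       ((exists P, is_pencil_in P L /\ sys_contains P (Fl 3%N)) \/
        (exists A, [/\ A \in L, A != 0 & quad_singular_along A (Fl 3%N)])))
  /\
  (not_stable_type L rho3 <->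
     exists Fl, complete_flag Fl /\
       (sys_contains L (Fl 2%N) \/
        (exists P, [/\ is_pencil_in P L, sys_contains P (Fl 2%N) &
           exists A, [/\ A \in P, A != 0 & quad_singular_along A (Fl 2%N)]])))
  /\
  (not_stable_type L rho4 <->
     exists Fl, complete_flag Fl /\
       ((sys_contains L (Fl 1%N) /\
           exists A, [/\ A \in L, A != 0 & quad_singular_along A (Fl 1%N)]) \/
        (exists P, is_pencil_in P L /\ sys_singular_along P (Fl 1%N))))
  /\
  (not_stable_type L rho5 <->
     exists Fl, complete_flag Fl /\
       (sys_contains L (Fl 0%N) /\
        exists P, is_pencil_in P L /\ sys_singular_along P (Fl 0%N))).
Proof.
move=> netL; have two : (2%:R : R[i]) != 0 by rewrite pnatr_eq0.
have dimL := proj1 netL.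
split; first exact: (not_stable_two_level two (@numtype_two_level 4 1 1 (-5) erefl)
  isT erefl erefl isT netL (fun V => destabilizing1 two V dimL)).
split; first exact: (not_stable_two_level two (@numtype_two_level 3 2 1 (-2) erefl)
  isT erefl erefl isT netL (fun V => destabilizing2 two V dimL)).
split; first exact: (not_stable_two_level two (@numtype_two_level 2 3 1 (-1) erefl)
  isT erefl erefl isT netL (fun V => destabilizing3 two V dimL)).
split; first exact: (not_stable_two_level two (@numtype_two_level 1 4 2 (-1) erefl)
  isT erefl erefl isT netL (fun V => destabilizing4 two V dimL)).
exact: (not_stable_two_level two (@numtype_two_level 0 5 5 (-1) erefl)
  isT erefl erefl isT netL (fun V => destabilizing5 two V dimL)).
Qed.
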